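(* Let $n\ge3$ be an odd integer. Then the number of edges of $OD(\mathcal{D}_n)$ is $$|E(OD(\mathcal{D}_n))|=\frac12\Big(3n-1+\sum_{\substack{m\mid n\\ m>1}}\Big(m-2\phi(m)+\sum_{\lambda\mid\frac{n}{m}}\phi(\lambda m)\Big)\phi(m)\Big),$$ where $\phi$ is Euler's totient function.
   Context: The dihedral group $\mathcal{D}_n$ ($n\ge3$) is the group $\langle a,b\mid a^n=b^2=(ab)^2=e\rangle$ of order $2n$. For a finite group $G$, $o(x)$ denotes the order of $x\in G$. The order-divisor graph $OD(G)$ is the simple undirected graph with vertex set $G$, in which two distinct vertices $x,y$ are adjacent if and only if $o(x)\neq o(y)$ and either $o(x)\mid o(y)$ or $o(y)\mid o(x)$. *)

From HB Require Import structures.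
From mathcomp Require Import all_boot all_order all_algebra all_fingroup all_solvable.
Set Implicit Arguments. Unset Strict Implicit. Unset Printing Implicit Defensive.

Definition od_adj (gT : finGroupType) (x y : gT) : bool :=
  [&& x != y, #[x]%g != #[y]%g & (#[x]%g %| #[y]%g) || (#[y]%g %| #[x]%g)].

Definition OD_edges (gT : finGroupType) (G : {set gT}) : {set {set gT}} :=
  [set E : {set gT} | [exists x in G, exists y in G, od_adj x y && (E == [set x; y])]].

(* The rotations of D_n form a cyclic group <x> of odd order n, and the other n
   elements are involutions. An involution is adjacent only to 1, because a
   nontrivial rotation has odd order > 1, which is incomparable with 2; the
   identity is adjacent to all 2n - 1 other elements. A rotation of order d > 1
   is adjacent exactly to the rotations whose order is a divisor or a multiple
   of d other than d itself; as a cyclic group has phi(e) elements of order e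
   for each divisor e of its order, there are
   d + sum_(l | n/d) phi(l d) - 2 phi(d) of them. Summing these degrees over
   the phi(d) rotations of each order d | n gives twice the number of edges. *)

From HB Require Import structures.
From mathcomp Require Import all_boot all_order all_algebra all_fingroup all_solvable.
From mathcomp Require Import zify lra.
Set Implicit Arguments. Unset Strict Implicit. Unset Printing Implicit Defensive.
Import GRing.Theory Num.Theory.

Section DivisorSums.

Variables (n : nat) (F : nat -> nat).
Hypothesis n_gt0 : 0 < n.

Lemma sum_divisors_dvdn d : d %| n ->
  \sum_(e <- divisors n | e %| d) F e = \sum_(e <- divisors d) F e.
Proof.
move=> dv_d_n; have d_gt0 : 0 < d by apply: dvdn_gt0 dv_d_n.
rewrite -big_filter; apply: perm_big; apply: uniq_perm; rewrite ?filter_uniq ?divisors_uniq //.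
move=> e; rewrite mem_filter -!dvdn_divisors //.
by apply/andP/idP => [[] // | dv_e_d]; split => //; apply: dvdn_trans dv_d_n.
Qed.

Lemma sum_divisors_multiples d : d %| n ->
  \sum_(e <- divisors n | d %| e) F e = \sum_(l <- divisors (n %/ d)) F (l * d).
Proof.
move=> dv_d_n; have d_gt0 : 0 < d by apply: dvdn_gt0 dv_d_n.
have nd_gt0 : 0 < n %/ d by rewrite divn_gt0 // dvdn_leq.
rewrite -big_filter -(big_map (fun l => l * d) xpredT).
apply: perm_big; apply: uniq_perm; rewrite ?filter_uniq ?divisors_uniq //.
  by rewrite map_inj_uniq ?divisors_uniq // => l1 l2 /eqP; rewrite eqn_pmul2r // => /eqP.
move=> e; rewrite mem_filter -dvdn_divisors //.
apply/andP/mapP => [[dv_d_e dv_e_n] | [l]].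
  exists (e %/ d); last by rewrite divnK.
  by rewrite -dvdn_divisors // -(dvdn_pmul2r d_gt0) !divnK.
rewrite -dvdn_divisors // => dv_l -> ; split; first exact: dvdn_mull.
by rewrite -(divnK dv_d_n) dvdn_pmul2r.
Qed.

End DivisorSums.

Lemma sum_totient_divisors n : 0 < n -> \sum_(d <- divisors n) totient d = n.
Proof.
move=> n_gt0; rewrite -[RHS]sum_totient_dvd -(big_mkord (fun d => d %| n)) -[in RHS]big_filter.
apply: perm_big; apply: uniq_perm; rewrite ?filter_uniq ?iota_uniq ?divisors_uniq //.
move=> d; rewrite mem_filter mem_iota -dvdn_divisors //= add0n ltnS.
by apply/idP/andP => [dv_d | [] //]; split => //; apply: dvdn_leq.
Qed.

Lemma sum_dvdn_comparable (s : seq nat) d (F : nat -> nat) : uniq s -> d \in s ->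
  \sum_(e <- s | (d != e) && ((d %| e) || (e %| d))) F e + 2 * F d =
  \sum_(e <- s | e %| d) F e + \sum_(e <- s | d %| e) F e.
Proof.
move=> s_uniq d_in_s.
rewrite big_mkcond (big_mkcond (fun e => e %| d)) (big_mkcond (fun e => d %| e)).
rewrite -big_split /= !(bigD1_seq d) //= eqxx dvdnn add0n addnC mul2n -addnn.
congr (_ + _); apply: eq_bigr => e ne_ed; rewrite eq_sym ne_ed /=.
case: (boolP (d %| e)) => [dv_de | _]; case: (boolP (e %| d)) => [dv_ed | _] //=.
  by case/eqP: ne_ed; apply/eqP; rewrite eqn_dvd dv_ed.
by rewrite addn0.
Qed.

Section SymmetricRelationEdges.

Variables (T : finType) (r : rel T).
Hypotheses (r_sym : symmetric r) (r_irr : irreflexive r).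

Lemma card_edges_double :
  2 * #|[set [set p.1; p.2] | p in [set p : T * T | r p.1 p.2]]| =
  \sum_x #|[set y | r x y]|.
Proof.
set P := [set p : T * T | r p.1 p.2].
transitivity #|P|; last first.
  rewrite (eq_bigr (fun x => \sum_(y | r x y) 1)) => [|x _]; last first.
    by rewrite sum1dep_card; apply: eq_card => y; rewrite inE.
  by rewrite pair_big_dep /= -sum1_card; apply: eq_bigl => p; rewrite inE.
rewrite mulnC -sum_nat_const -sum1_card (partition_big_imset (fun p => [set p.1; p.2])).
apply: eq_bigr => E /imsetP[[a b]]; rewrite inE /= => rab ->.
have a_neq_b : a != b by apply: contraTneq rab => ->; rewrite r_irr.
rewrite (eq_bigl (mem [set (a, b); (b, a)])) => [|[x y]].
  by rewrite sum1_card cards2 xpair_eqE (negbTE a_neq_b).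
rewrite !inE /=; apply/andP/idP => [[rxy /eqP eq_xy_ab] | ].
  have : (x \in [set a; b]) && (y \in [set a; b]) by rewrite -eq_xy_ab !set21 set22.
  rewrite !inE => /andP[/orP[]/eqP ? /orP[]/eqP ?]; subst x y;
    by rewrite ?r_irr in rxy; rewrite ?eqxx ?orbT.
by case/orP=> /eqP[-> ->]; rewrite ?(r_sym b) // setUC.
Qed.

End SymmetricRelationEdges.

Section CyclicOrders.

Local Open Scope group_scope.
Variables (gT : finGroupType) (a : gT).

Lemma card_cycle_order d :
  d %| #[a] -> #|[set y in <[a]> | #[y] == d]| = totient d.
Proof.
move=> dv_d_a; set b := (a ^+ (#[a] %/ d)).
have ob : #[b] = d by rewrite orderXdiv ?dvdn_div // divnA // mulKn.
rewrite -{2}ob totient_gen; apply: eq_card => y; rewrite !inE /generator.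
(* the elements of order d are the generators of the unique subgroup of order d *)
have defS := cycle_sub_group dv_d_a.
apply/andP/eqP => [[ya /eqP oy] | eby].
  have : <[y]>%G \in [set H : {group gT} | H \subset <[a]> & #|H| == d].
    by rewrite inE cycle_subG ya -orderE oy eqxx.
  by rewrite defS inE => /eqP[->].
have yb : y \in <[b]> by rewrite eby cycle_id.
by split; [apply: subsetP (cycleX a _) _ yb | rewrite -ob !orderE eby].
Qed.

Lemma sum_cycle_order (R : nmodType) (P : pred nat) (F : nat -> R) :
  (\sum_(h in <[a]> | P #[h]) F #[h] =
   \sum_(d <- divisors #[a] | P d) F d *+ totient d)%R.
Proof.
have order_divisors h : h \in <[a]> -> #[h] \in divisors #[a].
  by move=> ha; rewrite -dvdn_divisors // orderE order_dvdG.
transitivity (\sum_(d <- divisors #[a] | P d)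
                \sum_(h in <[a]> | #[h] == d) F d)%R; last first.
  rewrite big_seq_cond [RHS]big_seq_cond; apply: eq_bigr => d /andP[dv_d _].
  rewrite -dvdn_divisors // in dv_d.
  rewrite sumr_const -(card_cycle_order dv_d).
  by congr (_ *+ _)%R; apply: eq_card => h; rewrite !inE.
rewrite (exchange_big_dep (fun h => h \in <[a]>)) /=; last by move=> d h _ /andP[].
rewrite big_mkcondr; apply: eq_bigr => h ha.
rewrite (big_rem _ (order_divisors h ha)) /= ha eqxx !andbT big1_seq ?addr0 //.
move=> d /andP[/and3P[_ _ /eqP <-]].
by rewrite mem_rem_uniq ?divisors_uniq // inE eqxx.
Qed.

Lemma card_cycle_orders (P : pred nat) :
  #|[set h in <[a]> | P #[h]]| = \sum_(d <- divisors #[a] | P d) totient d.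
Proof.
apply/eqP; rewrite -(eqr_nat rat) -sum1_card !natr_sum.
rewrite (eq_bigl (fun h => (h \in <[a]>) && P #[h])) => [|h]; last by rewrite inE.
by rewrite (sum_cycle_order _ (fun=> 1%R)).
Qed.

End CyclicOrders.

Section OrderDivisorAdjacency.

Local Open Scope group_scope.
Variable gT : finGroupType.

Lemma od_adjE (x y : gT) :
  od_adj x y = (#[x] != #[y]) && ((#[x] %| #[y]) || (#[y] %| #[x])).
Proof. by rewrite /od_adj; case: eqVneq => [-> | _] //=; rewrite eqxx. Qed.

Lemma od_adj_sym : symmetric (@od_adj gT).
Proof. by move=> x y; rewrite !od_adjE eq_sym orbC. Qed.

Lemma od_adj_irr : irreflexive (@od_adj gT).
Proof. by move=> x; rewrite od_adjE eqxx. Qed.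

Lemma od_adj1 (h : gT) : od_adj 1 h = (h != 1).
Proof. by rewrite od_adjE order1 dvd1n andbT eq_sym order_eq1. Qed.

Lemma od_degree1 : #|[set h | od_adj (1 : gT) h]| = #|gT|.-1.
Proof.
by rewrite -(cardsC1 (1 : gT)); apply: eq_card => h; rewrite !inE od_adj1.
Qed.

Lemma OD_edgesT :
  OD_edges [set: gT] = [set [set p.1; p.2] | p in [set p : gT * gT | od_adj p.1 p.2]].
Proof.
apply/setP => E; rewrite inE; apply/existsP/imsetP.
  case=> x /andP[_ /existsP[y /andP[_ /andP[xy /eqP ->]]]].
  by exists (x, y); rewrite ?inE.
case=> -[x y]; rewrite inE /= => xy ->.
by exists x; rewrite inE; apply/existsP; exists y; rewrite inE xy eqxx.
Qed.

Lemma card_od_adj_cycle (a g : gT) : g \in <[a]> ->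
  #|[set h in <[a]> | od_adj g h]| + 2 * totient #[g] =
  #[g] + \sum_(l <- divisors (#[a] %/ #[g])) totient (l * #[g]).
Proof.
move=> ga; set d := #[g]; have dv_d : d %| #[a] by rewrite orderE order_dvdG.
have d_gt0 : 0 < d := order_gt0 g.
pose comparable e := (d != e) && ((d %| e) || (e %| d)).
have -> : [set h in <[a]> | od_adj g h] = [set h in <[a]> | comparable #[h]].
  by apply/setP => h; rewrite !inE od_adjE.
rewrite card_cycle_orders.
rewrite -sum_divisors_multiples // -[X in _ = X + _](sum_totient_divisors d_gt0).
rewrite -(sum_divisors_dvdn _ _ dv_d) // -sum_dvdn_comparable ?divisors_uniq //.
by rewrite -dvdn_divisors.
Qed.

End OrderDivisorAdjacency.

Section DihedralRotations.

Local Open Scope group_scope.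

Lemma order_mul_inverted (gT : finGroupType) (u y : gT) :
  y ^+ 2 = 1 -> u ^ y = u^-1 -> u * y != 1 -> #[u * y] = 2.
Proof.
move=> y2 uy nt_uy; apply: nt_prime_order => //.
have yV : y^-1 = y by apply/eqP; rewrite eq_invg_mul -(expgS y 1) y2.
by rewrite expgS expg1 -mulgA (mulgA y) -{1}yV -mulgA -conjgE uy mulgV.
Qed.

Lemma dihedral_rotation n : 1 < n ->
  exists x : 'D_(n.*2), #[x] = n /\ forall g, g \notin <[x]> -> #[g] = 2.
Proof.
move=> n_gt1; have n_gt0 := ltnW n_gt1.
have [_ /existsP[[x y] /= /eqP[defD xn y2 xy]]] :=
  isoGrpP _ (Grp_dihedral n_gt1) (isog_refl ('D_(n.*2))%G).
have {}defD : <[x]> * <[y]> = [set: 'D_(n.*2)].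
  by rewrite -norm_joinEr // norms_cycle xy groupV cycle_id.
have cardD : #|[set: 'D_(n.*2)]| = n.*2 by rewrite card_dihedral.
have Xy' : y \notin <[x]>.
  apply/negP => Xy; have : #|[set: 'D_(n.*2)]| <= n.
    by rewrite -defD mulGSid ?cycle_subG // -orderE dvdn_leq // order_dvdn xn.
  by rewrite cardD; lia.
have oy : #[y] = 2 by apply: nt_prime_order (group1_contra Xy').
have ox : #[x] = n.
  move: cardD; rewrite -defD TI_cardMg; last first.
    by rewrite setIC prime_TIg ?cycle_subG // -orderE oy.
  by rewrite -!orderE oy muln2 => /double_inj.
exists x; split=> // g Xg'; have : g \in [set: 'D_(n.*2)] by [].
rewrite -defD => /mulsgP[u v /cycleP[i ->] /cycleP[k ->] defg].
move: Xg'; rewrite defg -(expg_mod_order y) oy.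
have : k %% 2 < 2 by rewrite ltn_mod.
case: (k %% 2) => [|[|//]] _; first by rewrite mulg1 mem_cycle.
move=> Xg'; apply: order_mul_inverted => //; first by rewrite conjXg xy expgVn.
by apply: contraNneq Xg' => ->; rewrite group1.
Qed.

End DihedralRotations.

Section RotationsAndInvolutions.

Local Open Scope group_scope.
Variables (gT : finGroupType) (x : gT).
Hypotheses (odd_x : odd #[x]) (involutions : forall g, g \notin <[x]> -> #[g] = 2).

Lemma od_adj_involution g h : g \in <[x]> -> h \notin <[x]> -> od_adj g h = (g == 1).
Proof.
move=> Xg Xh'; rewrite od_adjE (involutions Xh').
have [-> | nt_g] := eqVneq g 1; first by rewrite order1.
have odd_g : odd #[g] by apply: dvdn_odd odd_x; rewrite orderE order_dvdG.
have g_gt1 : 1 < #[g] by rewrite order_gt1.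
rewrite dvdn2 odd_g orbF; apply/negbTE/negP.
by case/andP=> ne_g2 /(dvdn_leq (isT : 0 < 2)); lia.
Qed.

Lemma od_degree_involution g : g \notin <[x]> -> #|[set h | od_adj g h]| = 1%N.
Proof.
move=> Xg'; rewrite -(cards1 (1 : gT)); apply: eq_card => h; rewrite !inE.
have [Xh | Xh'] := boolP (h \in <[x]>); first by rewrite od_adj_sym od_adj_involution.
rewrite od_adjE !involutions // eqxx.
by apply/esym/negbTE; apply: contraNneq Xh' => ->; rewrite group1.
Qed.

Lemma od_degree_rotation g : g \in <[x]> -> g != 1 ->
  #|[set h | od_adj g h]| = #|[set h in <[x]> | od_adj g h]|.
Proof.
move=> Xg nt_g; apply: eq_card => h; rewrite !inE.
by have [// | Xh'] := boolP (h \in <[x]>); rewrite od_adj_involution // (negbTE nt_g).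
Qed.

Lemma sum_od_degree :
  \sum_(g : gT) #|[set h | od_adj g h]| =
  #|gT|.-1 + #|~: <[x]>| + \sum_(g in <[x]> | g != 1) #|[set h in <[x]> | od_adj g h]|.
Proof.
rewrite (bigID (mem <[x]>)) /= (bigD1 1) ?group1 //= od_degree1 addnAC -!addnA.
congr (_ + (_ + _)).
  rewrite -sum1_card; apply: eq_big => [g | g Xg']; first by rewrite inE.
  exact: od_degree_involution.
by apply: eq_bigr => g /andP[Xg nt_g]; rewrite od_degree_rotation.
Qed.

End RotationsAndInvolutions.

Local Open Scope ring_scope.

Lemma sum_od_adj_cycle (gT : finGroupType) (a : gT) :
  (\sum_(g in <[a]>%g | g != 1%g) #|[set h in <[a]>%g | od_adj g h]|)%N%:Q =
  \sum_(d <- divisors #[a]%g | (1 < d)%N)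
    ((d%:Q - 2 * (totient d)%:Q +
      \sum_(l <- divisors (#[a]%g %/ d)) (totient (l * d))%:Q) * (totient d)%:Q).
Proof.
pose F (d : nat) := d%:Q - 2 * (totient d)%:Q +
  \sum_(l <- divisors (#[a]%g %/ d)) (totient (l * d))%:Q.
rewrite sumMz (eq_bigl (fun g => (g \in <[a]>%g) && (1 < #[g]%g)%N)) => [|g];
  last by rewrite order_gt1.
rewrite (eq_bigr (fun g => F #[g]%g)) => [|g /andP[ag _]].
  rewrite (sum_cycle_order a (fun d => 1 < d)%N F).
  by apply: eq_bigr => d _; rewrite mulr_natr pmulrn.
have := congr1 (fun k : nat => k%:Q) (card_od_adj_cycle ag).
rewrite PoszD PoszM PoszD !intrD intrM sumMz /F; lra.
Qed.

Theorem mainTheorem19 (n : nat) : (3 <= n)%N -> odd n ->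
  (#|OD_edges [set: 'D_(n.*2)]|)%:Q =
  (1 / 2) * ((3 * n)%:Q - 1 +
    \sum_(m <- divisors n | (1 < m)%N)
      ((m%:Q - 2 * (totient m)%:Q +
        \sum_(l <- divisors (n %/ m)) (totient (l * m))%:Q) * (totient m)%:Q)).
Proof.
move=> n_ge3 odd_n; have n_gt1 : (1 < n)%N by apply: ltnW.
have [x [ox involutions]] := dihedral_rotation n_gt1.
have odd_x : odd #[x]%g by rewrite ox.
have card_D : #|'D_(n.*2)| = n.*2 by rewrite -cardsT card_dihedral.
have card_refl : #|~: <[x]>%g| = n.
  by apply/eqP; rewrite -(eqn_add2l n) -{1}ox orderE cardsC card_D addnn.
have := card_edges_double (@od_adj_sym (dihedral_gtype n.*2)) (@od_adj_irr _).
rewrite -OD_edgesT (sum_od_degree odd_x involutions) card_D card_refl.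
set S := (\sum_(g in _ | _) _)%N => edges_double.
have : (2 * #|OD_edges [set: 'D_(n.*2)]| + 1 = 3 * n + S)%N by rewrite edges_double; lia.
move/(congr1 (fun k : nat => k%:Q)).
rewrite PoszD PoszM PoszD PoszM !intrD !intrM /S sum_od_adj_cycle ox; lra.
Qed.
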